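(* Fix $n\ge 1$. Let $T=P(x,u_0,\dots,u_n)$ with $P$ a real polynomial, and let $Q$ be the (unique) real polynomial with $T=Q(x,v_0,\dots,v_n)$. Then $P$ does not depend on $x$ if and only if, on the region $u_n\neq0$, $$T=Q(\xi,I_n,I_{n-1},\dots,I_2,0,I_0),$$ i.e. $T$ is obtained from $Q$ by substituting $x\mapsto\xi$ and $v_j\mapsto I_{n-j}$ (with $I_1=0$). In this case, if $T\ne 0$, the deficiency of $T$ relative to $\mathcal P_n$ equals $n$ minus the degree in $\xi$ of $Q(\xi,I_n,\dots,I_2,0,I_0)$, regarded as a polynomial in the algebraically independent quantities $\xi,I_0,I_2,\dots,I_n$.
   Context: Operators are elements of $\mathbb R[x,u_0,\dots,u_n]$ acting on smooth $f$ by $P[f](x)=P(x,f(x),f'(x),\dots,f^{(n)}(x))$. $\mathcal P_s$ denotes real polynomials of degree $\le s$ ($\mathcal P_s=\{0\}$ for $s<0$); deficiency $m$ relative to $\mathcal P_n$ means $T(\mathcal P_n)\subset\mathcal P_{n-m}$ but $T(\mathcal P_n)\not\subset\mathcal P_{n-m-1}$. Define $v_j=\sum_{i=0}^{n-j}(-1)^i\frac{x^i}{i!}u_{i+j}$ for $j=0,\dots,n$; $x,v_0,\dots,v_n$ freely generate $\mathbb R[x,u_0,\dots,u_n]$. On the region $u_n\ne0$ define $\xi=u_{n-1}/u_n$ and $I_{n-j}=\sum_{i=0}^{n-j}(-1)^i u_{i+j}\frac{\xi^i}{i!}$ for $j=0,\dots,n$; thus $I_0=u_n$ and $I_1=0$.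 *)

From HB Require Import structures.
From mathcomp Require Import all_boot all_order all_algebra.
From mathcomp Require Import mpoly.
Set Implicit Arguments. Unset Strict Implicit. Unset Printing Implicit Defensive.
Import Order.TTheory GRing.Theory Num.Theory.
Local Open Scope ring_scope.

(* Conventions: an operator T = P(x,u_0,...,u_n) is an element
   P : {mpoly R[n.+2]}; variable 0 is x, variable (i+1) is u_i. *)

Section Defs.
Context (R : realFieldType) (n : nat).

Definition vpoly (j : nat) : {mpoly R[n.+2]} :=
  \sum_(i < (n - j).+1)
     (((-1) ^+ i / (i`!)%:R) *: ('X_ord0 ^+ i * 'X_(inord (i + j).+1))).

Definition vtuple : (n.+2).-tuple {mpoly R[n.+2]} :=
  [tuple if i == ord0 then 'X_ord0 else vpoly (i : nat).-1 | i < n.+2].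

Definition indep_x (P : {mpoly R[n.+2]}) : Prop :=
  forall m, m \in msupp P -> m ord0 = 0%N.

Definition xi (u : 'I_n.+2 -> R) : R := u (inord n) / u (inord n.+1).

Definition Ival (u : 'I_n.+2 -> R) (k : nat) : R :=
  \sum_(i < k.+1) ((-1) ^+ i * u (inord (i + (n - k)).+1) * xi u ^+ i / (i`!)%:R).

(* the point (xi, I_n, I_{n-1}, ..., I_2, 0, I_0): x |-> xi, v_j |-> I_{n-j},
   except v_{n-1} |-> 0 *)
Definition substpt (u : 'I_n.+2 -> R) : 'I_n.+2 -> R :=
  fun i => if i == ord0 then xi u
           else if (i : nat).-1 == n.-1 then 0 else Ival u (n - (i : nat).-1).

Definition applyOp (P : {mpoly R[n.+2]}) (f : {poly R}) (x : R) : R :=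
  P.@[fun i : 'I_n.+2 => if i == ord0 then x else (f^`((i : nat).-1)).[x]].

(* g is (the function of) a polynomial in P_s (degree <= s; P_s = {0} for s < 0) *)
Definition inPs (s : int) (g : R -> R) : Prop :=
  exists p : {poly R}, ((size p)%:Z <= s + 1)%R /\ forall x, g x = p.[x].

Definition maps_Pn_into (P : {mpoly R[n.+2]}) (s : int) : Prop :=
  forall f : {poly R}, (size f <= n.+1)%N -> inPs s (applyOp P f).

Definition deficiency (P : {mpoly R[n.+2]}) (m : int) : Prop :=
  maps_Pn_into P (n%:Z - m) /\ ~ maps_Pn_into P (n%:Z - m - 1).

(* Q(xi, I_n, ..., I_2, 0, I_0) as a polynomial in the n+1 independent
   indeterminates: variable 0 = xi, variable k (1 <= k <= n-1) = I_{n+1-k}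
   (substituted for v_{k-1}), variable n = I_0 (substituted for v_n);
   v_{n-1} is replaced by 0. *)
Definition redtuple : (n.+2).-tuple {mpoly R[n.+1]} :=
  [tuple if (i : nat) == n then 0
         else if (i : nat) == n.+1 then 'X_(inord n) else 'X_(inord i) | i < n.+2].

Definition Qred (Q : {mpoly R[n.+2]}) : {mpoly R[n.+1]} := Q \mPo redtuple.

End Defs.

Definition degIn (R : nzRingType) (k : nat) (p : {mpoly R[k]}) (i : 'I_k) : nat :=
  \max_(m <- msupp p) m i.

(* For f in P_n, Taylor's formula gives v_j(x, f(x), ..., f^(n)(x)) = f^(j)(0),
   so T[f](x) = Q(x, f(0), ..., f^(n)(0)) is a one-variable slice of Q in its
   first variable.  Evaluating the v_j at (xi, u_0, ..., u_n) instead of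
   (x, u_0, ..., u_n) gives I_(n-j), and v_(n-1) becomes u_(n-1) - xi u_n = 0;
   hence Q(xi, I_n, ..., I_2, 0, I_0) = P(xi, u_0, ..., u_n), which is
   P(x, u_0, ..., u_n) for all x exactly when P does not depend on x.
   In that case, if f^(n)(0) <> 0, evaluating at x + s with
   s = f^(n-1)(0) / f^(n)(0) instead of x makes f^(n-1) vanish and freezes the
   other coordinates, so T[f] is a translate of a slice of Q(xi, I_n, ..., 0, I_0)
   and has degree at most d = deg_xi.  These f realise every point with nonzero
   coordinates, so by the identity principle every slice of Q has degree at
   most d.  Conversely the f with f^(n-1)(0) = 0 realise every slice of the
   reduced polynomial, and one of them has degree d. *)

From HB Require Import structures.
From mathcomp Require Import all_boot all_order all_algebra.
From mathcomp Require Import mpoly.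
From mathcomp Require Import ring zify.
Set Implicit Arguments. Unset Strict Implicit. Unset Printing Implicit Defensive.
Import Order.TTheory GRing.Theory Num.Theory.
Local Open Scope ring_scope.

Section IdentityPrinciple.
Variable R : numDomainType.

Lemma poly_eq_nz (p q : {poly R}) :
  (forall x, x != 0 -> p.[x] = q.[x]) -> p = q.
Proof.
move=> Epq; apply/eqP; rewrite -subr_eq0; apply: contraT => nz.
have := max_poly_roots nz (rs := [seq i.+1%:R | i <- iota 0 (size (p - q))]).
rewrite size_map size_iota ltnn; apply.
  apply/allP => _ /mapP [i _ ->]; apply/rootP.
  by rewrite hornerD hornerN Epq ?subrr // pnatr_eq0.
by rewrite map_inj_uniq ?iota_uniq // => i j /eqP; rewrite eqr_nat => /eqP [].
Qed.

Lemma kronecker_inj k N (f g : 'I_k -> nat) :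
  (forall i, f i < N)%N -> (forall i, g i < N)%N ->
  (\sum_(i < k) f i * N ^ i = \sum_(i < k) g i * N ^ i)%N -> f =1 g.
Proof.
elim: k f g => [|k IH] f g ltfN ltgN; first by move=> _ [].
have split_sum (h : 'I_k.+1 -> nat) : (\sum_(i < k.+1) h i * N ^ i =
    h ord0 + N * \sum_(i < k) h (lift ord0 i) * N ^ i)%N.
  by rewrite big_ord_recl muln1 big_distrr; congr (_ + _)%N;
     apply: eq_bigr => i _; rewrite expnS mulnCA.
rewrite !split_sum => E.
have N_gt0 : (0 < N)%N by apply: leq_ltn_trans (ltfN ord0).
have E0 : f ord0 = g ord0.
  have := congr1 (modn^~ N) E.
  by rewrite ![(_ + N * _)%N]addnC ![(N * _)%N]mulnC !modnMDl !modn_small.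
have Elift : f \o lift ord0 =1 g \o lift ord0.
  apply: IH => [i|i|]; [exact: ltfN | exact: ltgN |].
  have := congr1 (divn^~ N) E.
  by rewrite ![(N * _)%N]mulnC !divnDMl // !divn_small // !add0n.
by move=> i; case: (unliftP ord0 i) => [j ->|->]; [exact: Elift | exact: E0].
Qed.

Lemma mpoly_eq0_nz k (p : {mpoly R[k]}) :
  (forall v : 'I_k -> R, (forall i, v i != 0) -> p.@[v] = 0) -> p = 0.
Proof.
(* Kronecker substitution: at [v i = t ^+ N ^ i] the monomials of [p] become
   distinct powers of [t]. *)
move=> p_nz; pose N := msize p.
pose kr (m : 'X_{1..k}) := (\sum_(i < k) m i * N ^ i)%N.
have ltN m : m \in msupp p -> forall i, (m i < N)%N.
  move=> mp i; apply: leq_ltn_trans (msize_mdeg_lt mp).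
  by rewrite mdegE (bigD1 i) //= leq_addr.
pose q : {poly R} := \sum_(m <- msupp p) p@_m *: 'X^(kr m).
have q0 : q = 0.
  apply: poly_eq_nz => t t_neq0; rewrite horner0 -(p_nz (fun i => t ^+ (N ^ i))).
    rewrite mevalE horner_sum; apply: eq_bigr => m _.
    rewrite hornerZ hornerXn -prodrXr; congr (_ * _).
    by apply: eq_bigr => i _; rewrite -exprM mulnC.
  by move=> i; rewrite expf_neq0.
apply/mpolyP => m; rewrite mcoeff0.
have [mp|/memN_msupp_eq0 //] := boolP (m \in msupp p).
have := congr1 (fun r : {poly R} => r`_(kr m)) q0.
rewrite coef_sumMXn coef0 big_mkcond (bigD1_seq m) ?msupp_uniq //= eqxx.
rewrite big1_seq ?addr0 // => m' /andP [neq_m'm m'p]; case: eqP => // /esym Ekr.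
by move/mnmP: (kronecker_inj (ltN _ mp) (ltN _ m'p) Ekr) neq_m'm => ->; rewrite eqxx.
Qed.

End IdentityPrinciple.

Lemma mcoeff_pihomog k (R : nzRingType) (mf : measure k) d (p : {mpoly R[k]}) m :
  (pihomog mf d p)@_m = if mf m == d then p@_m else 0.
Proof.
pose b := maxn (msize p) (mdeg m).+1.
rewrite (pihomogwE mf d (k := b)) ?leq_maxl // big_mkcond /=.
rewrite (eq_bigr (fun m' : 'X_{1..k < b} =>
           (if mf m' == d then p@_m' else 0) *: 'X_[m'])); last first.
  by move=> m' _; case: ifP; rewrite ?scale0r.
by rewrite (mcoeff_mpoly (fun m0 => if mf m0 == d then p@_m0 else 0)) ?leq_maxr.
Qed.

Definition mnm_at k (i : 'I_k) (m : 'X_{1..k}) : nat := m i.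

HB.instance Definition _ k (i : 'I_k) :=
  isMeasure.Build k (mnm_at i) (mnm0E i) (fun m1 m2 => mnmDE i m1 m2).

Section Slices.
Variables (R : numDomainType) (k : nat) (i : 'I_k).
Implicit Types (p : {mpoly R[k]}) (v : 'I_k -> R).

Local Notation pihomog_at := (pihomog (mnm_at i)).
Local Notation mdeg_at := (mmeasure (mnm_at i)).

Lemma meval_pihomog_at e p v :
  (pihomog_at e p).@[v] = v i ^+ e * (pihomog_at e p).@[[eta v with i |-> 1]].
Proof.
rewrite pihomogE !raddf_sum mulr_sumr /=; apply: eq_bigr => m /eqP me.
rewrite !mevalZ !mevalX mulrCA; congr (_ * _).
rewrite (bigD1 i) // [in RHS](bigD1 i) //= eqxx expr1n mul1r /mnm_at -me.
by congr (_ * _); apply: eq_bigr => j /negbTE ->.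
Qed.

Definition mslice p v : {poly R} :=
  \poly_(e < mdeg_at p) (pihomog_at e p).@[[eta v with i |-> 1]].

Lemma horner_mslice p v t : (mslice p v).[t] = p.@[[eta v with i |-> t]].
Proof.
rewrite horner_poly [in RHS](pihomog_partitionE (leqnn (mdeg_at p))) raddf_sum /=.
apply: eq_bigr => e _; rewrite [in RHS]meval_pihomog_at /= eqxx mulrC.
by congr (_ * _); apply: meval_eq => j /=; case: eqP.
Qed.

Lemma size_mslice p v : (size (mslice p v) <= mdeg_at p)%N.
Proof. exact: size_poly. Qed.

Lemma mmeasure_at_leq_size_mslice p s :
  (forall v, (forall j, v j != 0) -> (size (mslice p v) <= s)%N) ->
  (mdeg_at p <= s)%N.
Proof.
move=> size_le; apply/bigmax_leqP_seq => m mp _; rewrite ltnNge; apply/negP => le_sm.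
suff /(congr1 (mcoeff m)) : pihomog_at (m i) p = 0.
  by rewrite mcoeff_pihomog eqxx mcoeff0 => /eqP; rewrite mcoeff_eq0 mp.
apply: mpoly_eq0_nz => v nz_v; rewrite meval_pihomog_at.
have Em : (pihomog_at (m i) p).@[[eta v with i |-> 1]] = (mslice p v)`_(m i).
  by rewrite coef_poly (mmeasure_mnm_lt (mnm_at i) mp).
by rewrite Em nth_default ?mulr0 // (leq_trans (size_le v nz_v)).
Qed.

Lemma mmeasure_at_leq_degIn p : (mdeg_at p <= (degIn p i).+1)%N.
Proof.
by apply/bigmax_leqP_seq => m mp _; rewrite ltnS (leq_bigmax_seq m).
Qed.

Lemma degIn_lt_mmeasure_at p : p != 0 -> (degIn p i < mdeg_at p)%N.
Proof.
move=> p_neq0; have pos : (0 < mdeg_at p)%N by rewrite lt0n mmeasure_poly_eq0.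
rewrite -(prednK pos) ltnS; apply/bigmax_leqP_seq => m mp _.
by rewrite -ltnS prednK // (mmeasure_mnm_lt (mnm_at i) mp).
Qed.

Lemma meval_indep p v a : (forall m, m \in msupp p -> m i = 0%N) ->
  p.@[[eta v with i |-> a]] = p.@[v].
Proof.
move=> indep; rewrite !mevalE; apply: eq_big_seq => m mp; congr (_ * _).
by apply: eq_bigr => j _ /=; case: eqP => [->|//]; rewrite indep // !expr0.
Qed.

End Slices.

Section Taylor.
Variable R : numFieldType.
Implicit Type f g : {poly R}.

Lemma horner_taylor g N x y : (size g <= N.+1)%N ->
  g.[x + y] = \sum_(j < N.+1) g^`(j).[x] * y ^+ j / j`!%:R.
Proof.
move=> size_g; rewrite (nderiv_taylor_wide (mulrC x y) size_g).
apply: eq_bigr => j _; rewrite nderivn_def hornerMn -mulr_natr.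
by rewrite mulrAC mulfK // pnatr_eq0 -lt0n fact_gt0.
Qed.

Lemma size_derivn_leq f N j : (size f <= N.+1)%N -> (size f^`(j) <= (N - j).+1)%N.
Proof.
move=> size_f; apply/leq_sizeP => l lt_l; rewrite coef_derivn nth_default ?mul0rn //.
by apply: leq_trans size_f _; lia.
Qed.

Lemma derivn_addn f l j : f^`(l + j) = f^`(j)^`(l).
Proof. exact: iterD. Qed.

End Taylor.

Lemma inord_neq0 k j : (0 < j < k.+1)%N -> (inord j : 'I_k.+1) != ord0.
Proof. by case/andP => j_gt0 lt_jk; rewrite -val_eqE /= inordK // -lt0n. Qed.

Section Operators.
Variables (R : realFieldType) (n : nat).
Implicit Types (f : {poly R}) (u c : 'I_n.+2 -> R).

Definition jet f x : 'I_n.+2 -> R :=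
  fun i => if i == ord0 then x else f^`(i.-1).[x].

Definition poly_of_jet c : {poly R} := \poly_(j < n.+1) (c (inord j.+1) / j`!%:R).

Lemma size_poly_of_jet c : (size (poly_of_jet c) <= n.+1)%N.
Proof. exact: size_poly. Qed.

Lemma jet_poly_of_jet c i : i != ord0 -> jet (poly_of_jet c) 0 i = c i.
Proof.
move=> i_neq0; have i_gt0 : (0 < i)%N by rewrite lt0n.
rewrite /jet (negbTE i_neq0) horner_coef0 coef_derivn addn0 coef_poly ffactnn.
have -> : (i.-1 < n.+1)%N by have := ltn_ord i; lia.
rewrite -[_ *+ _]mulr_natr divfK ?pnatr_eq0 -?lt0n ?fact_gt0 //.
by rewrite prednK // inord_val.
Qed.

Lemma meval_vpoly u j :
  (vpoly R n j).@[u] =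
  \sum_(i < (n - j).+1) (-1) ^+ i / i`!%:R * (u ord0 ^+ i * u (inord (i + j).+1)).
Proof.
rewrite /vpoly raddf_sum /=.
by apply: eq_bigr => i _; rewrite mevalZ mevalM rmorphXn /= !mevalXU.
Qed.

Lemma meval_vpoly_jet f x y j : (size f <= n.+1)%N -> (j <= n)%N ->
  (vpoly R n j).@[[eta jet f x with ord0 |-> y]] = f^`(j).[x - y].
Proof.
move=> size_f le_jn; rewrite meval_vpoly /=.
rewrite (horner_taylor x (- y) (size_derivn_leq j size_f)).
apply: eq_bigr => l _; have lt_l := ltn_ord l.
rewrite (negbTE (inord_neq0 _)); last by lia.
rewrite /jet (negbTE (inord_neq0 _)); last by lia.
by rewrite inordK /= ?derivn_addn ?(exprNn y); [ring | lia].
Qed.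

(* Slot [n] of a point of [Q] carries [v_(n-1)], which [Qred] sets to [0];
   [unsqueeze] inserts that [0] and [squeeze] drops the slot. *)
Definition unsqueeze (w : 'I_n.+1 -> R) : 'I_n.+2 -> R :=
  fun i => if i == n :> nat then 0
           else if i == n.+1 :> nat then w (inord n) else w (inord i).

Definition squeeze c : 'I_n.+1 -> R :=
  fun k => c (inord (if k == n :> nat then n.+1 else k)).

Section Composition.
Variables (P Q : {mpoly R[n.+2]}).
Hypothesis PQ : P = Q \mPo vtuple R n.

Lemma meval_Qred w : (Qred Q).@[w] = Q.@[unsqueeze w].
Proof.
rewrite /Qred comp_mpoly_meval; apply: meval_eq => i; rewrite tnth_mktuple /unsqueeze.
by case: ifP => _; [rewrite meval0 | case: ifP => _; rewrite mevalXU].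
Qed.

Lemma applyOpE f x : applyOp P f x = P.@[jet f x].
Proof. by []. Qed.

Lemma meval_comp_jet f x y : (size f <= n.+1)%N ->
  P.@[[eta jet f x with ord0 |-> y]] = Q.@[[eta jet f (x - y) with ord0 |-> y]].
Proof.
move=> size_f; rewrite PQ comp_mpoly_meval; apply: meval_eq => i /=.
rewrite tnth_mktuple; case: eqP => [_|/eqP i_neq0]; first by rewrite mevalXU.
by rewrite meval_vpoly_jet /jet ?(negbTE i_neq0) //; have := ltn_ord i; lia.
Qed.

Lemma applyOp_comp f x : (size f <= n.+1)%N ->
  applyOp P f x = Q.@[[eta jet f 0 with ord0 |-> x]].
Proof.
move=> size_f; rewrite applyOpE; have := meval_comp_jet x x size_f; rewrite subrr => <-.
by apply: meval_eq => i /=; case: eqP => // ->.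
Qed.

Lemma applyOp_poly_of_jet c x :
  applyOp P (poly_of_jet c) x = Q.@[[eta c with ord0 |-> x]].
Proof.
rewrite applyOp_comp ?size_poly_of_jet //; apply: meval_eq => i /=.
by case: eqP => // /eqP /jet_poly_of_jet.
Qed.

Hypothesis n_gt0 : (0 < n)%N.

Lemma xi_with_x u t : xi [eta u with ord0 |-> t] = xi u.
Proof. by rewrite /xi /= !(negbTE (inord_neq0 _)) //; lia. Qed.

Lemma unsqueezeK c : c (inord n) = 0 -> unsqueeze (squeeze c) =1 c.
Proof.
move=> cn0 i; have lt_i := ltn_ord i; rewrite /unsqueeze /squeeze.
case: eqP => [Ein|nin].
  by rewrite -cn0; congr c; apply/val_inj; rewrite /= inordK.
rewrite inordK // eqxx; case: eqP => [Ein1|nin1].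
  by congr c; apply/val_inj; rewrite /= inordK.
by rewrite inordK ?(negbTE (introN eqP nin)) ?inord_val //; lia.
Qed.

Lemma horner_mslice_Qred w t :
  (mslice ord0 (Qred Q) w).[t] = Q.@[[eta unsqueeze w with ord0 |-> t]].
Proof.
rewrite horner_mslice meval_Qred; apply: meval_eq => i; rewrite /unsqueeze /=.
have lt_i := ltn_ord i.
case: (eqVneq i ord0) => [->|i_neq0] /=.
  by rewrite (inord_val (@ord0 n)) eqxx !ifN_eq //; lia.
have i_gt0 : (0 < i)%N by rewrite lt0n.
case: ifP => // /eqP i_neq_n.
by case: ifP => [_|/eqP i_neq_n1]; rewrite (negbTE (inord_neq0 _)) //; lia.
Qed.

Lemma meval_substpt u : u (inord n.+1) != 0 ->
  Q.@[substpt u] = P.@[[eta u with ord0 |-> xi u]].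
Proof.
move=> un_neq0; rewrite PQ comp_mpoly_meval; apply: meval_eq => i.
rewrite tnth_mktuple /substpt; case: eqP => [_|/eqP i_neq0]; first by rewrite mevalXU.
have lt_i := ltn_ord i; rewrite meval_vpoly /=.
case: eqP => [Ei|ne].
  rewrite Ei (_ : n - n.-1 = 1)%N; last by lia.
  rewrite !big_ord_recr big_ord0 /= !(negbTE (inord_neq0 _)); [|lia|lia].
  by rewrite add0n add1n prednK // /xi fact0 (_ : 1`! = 1)%N //; field.
rewrite /Ival subKn; last by lia.
apply: eq_bigr => l _; rewrite (negbTE (inord_neq0 _)); last by have := ltn_ord l; lia.
ring.
Qed.

Lemma indep_xP :
  indep_x P <-> (forall u, u (inord n.+1) != 0 -> P.@[u] = Q.@[substpt u]).
Proof.
split=> [indep u un_neq0 | PQ_substpt]; first by rewrite meval_substpt // meval_indep.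
have slice_const v : (forall j, v j != 0) ->
    mslice ord0 P v = (P.@[[eta v with ord0 |-> xi v]])%:P.
  move=> nz_v; apply: poly_eq_nz => t _.
  have vn_neq0 : [eta v with ord0 |-> t] (inord n.+1) != 0.
    by rewrite /= (negbTE (inord_neq0 _)) //; lia.
  rewrite horner_mslice hornerC (PQ_substpt _ vn_neq0) meval_substpt // xi_with_x.
  by apply: meval_eq => j /=; case: eqP.
have le1 : (mmeasure (mnm_at ord0) P <= 1)%N.
  by apply: mmeasure_at_leq_size_mslice => v /slice_const ->; rewrite size_polyC leq_b1.
move=> m /(mmeasure_mnm_lt (mnm_at ord0)) /leq_trans /(_ le1).
by rewrite ltnS leqn0 => /eqP.
Qed.

Lemma applyOp_size_degIn_Qred f : indep_x P -> (size f <= n.+1)%N -> f^`(n).[0] != 0 ->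
  exists2 p : {poly R}, (size p <= (degIn (Qred Q) ord0).+1)%N &
                        forall x, applyOp P f x = p.[x].
Proof.
move=> indep size_f; set a := f^`(n.-1).[0]; set b := f^`(n).[0] => b_neq0.
have derivn_n1 x : f^`(n.-1).[x] = a + b * x.
  rewrite -[x]add0r (horner_taylor 0 x (size_derivn_leq n.-1 size_f)).
  rewrite (_ : n - n.-1 = 1)%N; last by lia.
  rewrite !big_ord_recr big_ord0 /= add0r -derivnS prednK //.
  by rewrite -/a -/b fact0 (_ : 1`! = 1)%N //; field.
(* Since [P] ignores [x], it can be evaluated with [x + s] in place of [x];
   then the [v_j] take the values [f^`(j).[- s]], constant in [x], and
   [v_(n-1)] vanishes. *)
set s := a / b.
set c := jet f (- s).
have c_n : c (inord n) = 0.
  rewrite /c /jet (negbTE (inord_neq0 _)) ?inordK ?derivn_n1 /s //=; last lia.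
  by field.
exists ((mslice ord0 (Qred Q) (squeeze c)) \Po ('X + s%:P)).
  by rewrite size_comp_poly2 ?size_XaddC // (leq_trans (size_mslice _ _ _)) ?mmeasure_at_leq_degIn.
move=> x; rewrite horner_comp !hornerE horner_mslice_Qred applyOpE.
rewrite -(meval_indep _ (x + s) indep) meval_comp_jet //.
rewrite (_ : x - (x + s) = - s); last by ring.
by apply: meval_eq => i /=; rewrite unsqueezeK.
Qed.

Lemma mmeasure_at_leq_degIn_Qred : indep_x P ->
  (mmeasure (mnm_at ord0) Q <= (degIn (Qred Q) ord0).+1)%N.
Proof.
move=> indep; apply: mmeasure_at_leq_size_mslice => c nz_c.
have jet_n : (poly_of_jet c)^`(n).[0] = c (inord n.+1).
  have ni : (inord n.+1 : 'I_n.+2) != ord0 by apply: inord_neq0; lia.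
  by rewrite -(jet_poly_of_jet c ni) /jet (negbTE ni) inordK.
have [|p size_p applyOp_p] := applyOp_size_degIn_Qred indep (size_poly_of_jet c).
  by rewrite jet_n nz_c.
suff -> : mslice ord0 Q c = p by [].
by apply: poly_eq_nz => x _; rewrite horner_mslice -applyOp_p applyOp_poly_of_jet.
Qed.

Lemma Qred_neq0 : indep_x P -> P != 0 -> Qred Q != 0.
Proof.
move=> indep; apply: contra => /eqP Qred0; apply/eqP/mpoly_eq0_nz => u nz_u.
have substpt_n : substpt u (inord n) = 0.
  by rewrite /substpt (negbTE (inord_neq0 _)) ?inordK ?eqxx //; lia.
rewrite (indep_xP.1 indep u (nz_u _)) -(meval_eq _ (unsqueezeK substpt_n)).
by rewrite -meval_Qred Qred0 meval0.
Qed.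

End Composition.
End Operators.

Unset Implicit Arguments. Set Strict Implicit.

Theorem mainTheorem2 (R : realFieldType) (n : nat) (P Q : {mpoly R[n.+2]}) :
  (1 <= n)%N ->
  P = Q \mPo vtuple R n ->
  (indep_x P <->
     (forall u : 'I_n.+2 -> R, u (inord n.+1) != 0 -> P.@[u] = Q.@[substpt u]))
  /\
  (indep_x P -> P != 0 ->
     deficiency P (n%:Z - (degIn (Qred Q) ord0)%:Z)).
Proof.
move=> n_gt0 PQ; split; first exact: indep_xP.
move=> indep P_neq0; set d := degIn (Qred Q) ord0.
rewrite /deficiency (_ : n%:Z - (n%:Z - d%:Z) = d%:Z); last by ring.
split=> [f size_f | low].
  exists (mslice ord0 Q (jet f 0)); split=> [|x]; last by rewrite (applyOp_comp PQ) // horner_mslice.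
  rewrite -PoszD lez_nat addn1 (leq_trans (size_mslice _ _ _)) //.
  exact: (mmeasure_at_leq_degIn_Qred PQ).
have := degIn_lt_mmeasure_at ord0 (Qred_neq0 PQ n_gt0 indep P_neq0).
rewrite -/d ltnNge => /negP; apply; apply: mmeasure_at_leq_size_mslice => w _.
have [p [size_p applyOp_p]] := low _ (size_poly_of_jet (unsqueeze w)).
suff -> : mslice ord0 (Qred Q) w = p by move: size_p; rewrite subrK lez_nat.
apply: poly_eq_nz => x _; rewrite horner_mslice_Qred // -applyOp_p.
by rewrite (applyOp_poly_of_jet PQ).
Qed.
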